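(* Let $n\ge 0$, let $T$ be a triangulation of a regular polygon with $n+3$ vertices, let $\alpha,\alpha'$ be positive roots and write $S=\operatorname{Supp}\alpha$, $S'=\operatorname{Supp}\alpha'$. Then $\operatorname{Hom}_{\operatorname{Mod}{Q}_T}((M^\alpha,f^\alpha),(M^{\alpha'},f^{\alpha'}))\neq 0$ if and only if the following hold: (i) $S\cap S'\neq\emptyset$; (ii) there is no arrow in ${Q}_T$ from a vertex of $S\setminus S'$ to a vertex of $S\cap S'$; (iii) there is no arrow in ${Q}_T$ from a vertex of $S\cap S'$ to a vertex of $S'\setminus S$. In this case this Hom space is one-dimensional.
   Context: Diagonals of the polygon are called roots; those in $T$ are negative roots, indexed by a set $I$ (the one indexed by $i$ written $-\alpha_i$), and the others positive roots. $\operatorname{Supp}\alpha$ is the set of $i\in I$ with $-\alpha_i$ crossing $\alpha$. If $-\alpha_i,-\alpha_j$ bound a common triangle of $T$ with common vertex $x$, set $-\alpha_i<-\alpha_j$ if the minimal-angle rotation about $x$ sending the line through $-\alpha_i$ to that through $-\alpha_j$ is counterclockwise. ${Q}_T$ has vertex set $I$ and an arrow $j\to i$ whenever $-\alpha_i,-\alpha_j$ bound a common triangle and $-\alpha_i<-\alpha_j$. $\operatorname{Mod}{Q}_T$ is the category of finite-dimensional complex representations of ${Q}_T$ in which the composition of any two successive arrows in a triangle of ${Q}_T$ is zero. For a positive root $\alpha$, $(M^\alpha,f^\alpha)$ is the representation with $M^\alpha_i=\mathbb{C}$ for $i\in\operatorname{Supp}\alpha$, $M^\alpha_i=0$ otherwise,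 and $f^\alpha_{ij}=\mathrm{id}_{\mathbb{C}}$ on arrows between vertices of $\operatorname{Supp}\alpha$, $0$ otherwise. *)

From HB Require Import structures.
From mathcomp Require Import all_boot all_order all_algebra.
From mathcomp Require Import complex.
From mathcomp Require Import reals.
Set Implicit Arguments. Unset Strict Implicit. Unset Printing Implicit Defensive.
Import Order.TTheory GRing.Theory Num.Theory.
Local Open Scope ring_scope.

(* Polygon with n+3 vertices labelled 0, 1, ..., n+2 counterclockwise.      *)
Definition is_diag (n : nat) (p : 'I_n.+3 * 'I_n.+3) : bool :=
  ((p.1 : nat).+1 < p.2)%N && ~~ ((p.1 == 0 :> nat) && (p.2 == n.+2 :> nat)).

Definition diag (n : nat) := {p : 'I_n.+3 * 'I_n.+3 | is_diag p}.

Definition dlo n (d : diag n) : 'I_n.+3 := (val d).1.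
Definition dhi n (d : diag n) : 'I_n.+3 := (val d).2.

Definition epts n (d : diag n) : {set 'I_n.+3} := [set dlo d; dhi d].

Definition crosses n (d e : diag n) : bool :=
  [&& (dlo d < dlo e)%N, (dlo e < dhi d)%N & (dhi d < dhi e)%N] ||
  [&& (dlo e < dlo d)%N, (dlo d < dhi e)%N & (dhi e < dhi d)%N].

Definition triangulation n (T : {set diag n}) : bool :=
  [forall d in T, forall e in T, ~~ crosses d e] &&
  [forall d, (d \notin T) ==> [exists e in T, crosses d e]].

Definition positive_root n (T : {set diag n}) (a : diag n) : bool := a \notin T.

(* the index set I of the negative roots: the diagonals of T *)
Definition vtx n (T : {set diag n}) := {d : diag n | d \in T}.

Definition Supp n (T : {set diag n}) (a : diag n) : {set vtx T} :=
  [set i : vtx T | crosses (val i) a].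

Definition poly_edge n (y z : 'I_n.+3) : bool :=
  [|| (y : nat).+1 == z, (z : nat).+1 == y,
      ((y == 0 :> nat) && (z == n.+2 :> nat)) |
      ((z == 0 :> nat) && (y == n.+2 :> nat))].

Definition common_triangle n (T : {set diag n}) (d e : diag n) : bool :=
  (d != e) &&
  [exists x : 'I_n.+3, exists y : 'I_n.+3, exists z : 'I_n.+3,
    [&& epts d == [set x; y], epts e == [set x; z] &
        (poly_edge y z || [exists f in T, epts f == [set y; z]])]].

(* -alpha_d < -alpha_e: at the common vertex x, the rotation about x sending
   the side x--y (of d) to the side x--z (of e) through the (smaller) angle
   at x is counterclockwise; with vertices labelled counterclockwise this
   means that z comes after y when going counterclockwise around the polygon
   starting from x. *)
Definition root_lt n (d e : diag n) : bool :=
  [exists x : 'I_n.+3, exists y : 'I_n.+3, exists z : 'I_n.+3,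
    [&& epts d == [set x; y], epts e == [set x; z] &
        ((y + n.+3 - x) %% n.+3 < (z + n.+3 - x) %% n.+3)%N]].

Definition arrow n (T : {set diag n}) (j i : vtx T) : bool :=
  common_triangle T (val i) (val j) && root_lt (val i) (val j).
Arguments arrow {n} T j i.

(* Finite-dimensional representations of a quiver with vertex set I and
   arrow relation arr (arr j i = there is an arrow j -> i; in Q_T there is at
   most one arrow between two vertices).  M_i = K^(qdim i) (row vectors) and
   the map on the arrow j -> i is v |-> v *m qmap j i. *)
Record qrep (K : fieldType) (I : finType) := QRep {
  qdim : I -> nat;
  qmap : forall j i : I, 'M[K]_(qdim j, qdim i) }.

(* objects of Mod Q_T: composition of two successive arrows of a triangle
   (three distinct pairwise adjacent vertices) of Q_T is zero *)
Definition triangle_QT n (T : {set diag n}) (i j k : vtx T) : Prop :=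
  [&& [&& i != j, j != k & i != k],
      arrow T i j || arrow T j i, arrow T j k || arrow T k j &
      arrow T i k || arrow T k i].

Definition in_ModQT (K : fieldType) n (T : {set diag n}) (M : qrep K (vtx T))
  : Prop :=
  forall i j k : vtx T, triangle_QT i j k -> arrow T k j -> arrow T j i ->
    qmap M k j *m qmap M j i = 0.

(* morphisms of representations (Mod Q_T is a full subcategory, so these
   are the morphisms of Mod Q_T) *)
Definition qmorph (K : fieldType) (I : finType) (arr : rel I) (M N : qrep K I)
  (phi : forall i, 'M[K]_(qdim M i, qdim N i)) : Prop :=
  forall j i, arr j i -> qmap M j i *m phi i = phi j *m qmap N j i.

Definition qmorph_nonzero (K : fieldType) (I : finType) (M N : qrep K I)
  (phi : forall i, 'M[K]_(qdim M i, qdim N i)) : Prop :=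
  exists i, phi i != 0.

Definition Hom_nonzero (K : fieldType) (I : finType) (arr : rel I)
  (M N : qrep K I) : Prop :=
  exists phi : forall i, 'M[K]_(qdim M i, qdim N i),
    qmorph arr phi /\ qmorph_nonzero phi.

Definition Hom_dim1 (K : fieldType) (I : finType) (arr : rel I)
  (M N : qrep K I) : Prop :=
  exists phi0 : forall i, 'M[K]_(qdim M i, qdim N i), [/\ qmorph arr phi0, qmorph_nonzero phi0 &
    forall phi : forall i, 'M[K]_(qdim M i, qdim N i), qmorph arr phi -> exists c : K, forall i, phi i = c *: phi0 i].

Definition Malpha (R : realType) n (T : {set diag n}) (a : diag n)
  : qrep R[i] (vtx T) :=
  @QRep R[i] (vtx T) (fun i => if i \in Supp T a then 1%N else 0%N)
    (fun j i => if (j \in Supp T a) && (i \in Supp T a)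
                then const_mx 1 else 0).

(* Every M^alpha is at most one-dimensional at each vertex, so a morphism
   M^alpha -> M^alpha' is a family of scalars c_i vanishing off S :&: S', and
   on an arrow j -> i the morphism condition reads
   [j, i in S] c_i = c_j [j, i in S'].  Along arrows inside S :&: S' it forces
   c to be constant, an arrow from S :\: S' into S :&: S' or from S :&: S' into
   S' :\: S forces c = 0, and all other arrows impose nothing.  Everything thus
   reduces to the connectedness of S :&: S' in Q_T.  Given two diagonals of T
   crossing both alpha and alpha', walk from the first towards the second
   through the triangles of T: the side of the current triangle facing the
   target separates the two diagonals, hence is crossed by alpha and alpha' as
   well, and the number of polygon vertices on the target's side of it
   decreases. *)

From HB Require Import structures.
From mathcomp Require Import all_boot all_order all_algebra.
From mathcomp Require Import complex reals zify.
Set Implicit Arguments. Unset Strict Implicit. Unset Printing Implicit Defensive.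
Import GRing.Theory.

Definition crossn (a b c d : nat) : bool :=
  [&& a < c, c < b & b < d] || [&& c < a, a < d & d < b].

Lemma crossesE n (d e : diag n) :
  crosses d e = crossn (dlo d) (dhi d) (dlo e) (dhi e).
Proof. by []. Qed.

Lemma diag_bounds n (d : diag n) :
  [/\ (dlo d).+1 < dhi d, dhi d < n.+3
    & ~~ ((dlo d == 0 :> nat) && (dhi d == n.+2 :> nat))].
Proof. by case: d => [[x y] isd]; rewrite /dlo /dhi /=; case/andP: isd. Qed.

Lemma diag_inj n (d e : diag n) :
  dlo d = dlo e :> nat -> dhi d = dhi e :> nat -> d = e.
Proof.
rewrite /dlo /dhi => lo hi; apply: val_inj.
by case: (val d) (val e) lo hi => [x y] [x' y'] /= /val_inj-> /val_inj->.
Qed.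

(* For chords s < t and a < b: [under s t a b] says that (a, b) lies among the
   vertices s, ..., t, [apart s t a b] that it lies (weakly) on the other side
   of (s, t). *)
Definition under (s t a b : nat) : bool := (s <= a) && (b <= t).

Definition apart (s t a b : nat) : bool :=
  [|| b <= s, t <= a | (a <= s) && (t <= b)].

Lemma noncross_under_apart s t a b :
  a < b -> ~~ crossn a b s t -> under s t a b || apart s t a b.
Proof. by rewrite /crossn /under /apart; lia. Qed.

Lemma crossn_separate s t a b a' b' p q :
  under s t a' b' -> apart s t a b ->
  crossn a b p q -> crossn a' b' p q -> crossn s t p q.
Proof. by rewrite /crossn /under /apart; lia. Qed.

Lemma triangle_under u c v a b :
  u < c -> c < v -> under u v a b -> ~~ crossn a b u c -> ~~ crossn a b c v ->
  [|| (a == u) && (b == v), under u c a b | under c v a b].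
Proof. by rewrite /crossn /under; lia. Qed.

Section Triangulation.

Variables (n : nat) (T : {set diag n}).

Definition diagT (x y : nat) : bool :=
  [exists d in T, (dlo d == x :> nat) && (dhi d == y :> nat)].

Definition edgeT (x y : nat) : bool :=
  [|| x.+1 == y, (x == 0) && (y == n.+2) | diagT x y].

Definition triangleT (u c v : nat) : bool :=
  [&& u < c < v, edgeT u c, edgeT c v & edgeT u v].

Lemma diagT_bounds x y :
  diagT x y -> [/\ x.+1 < y, y < n.+3 & ~~ ((x == 0) && (y == n.+2))].
Proof. by case/existsP=> d /and3P[_ /eqP<- /eqP<-]; apply: diag_bounds. Qed.

Lemma diagT_val d : d \in T -> diagT (dlo d) (dhi d).
Proof. by move=> dT; apply/existsP; exists d; rewrite dT !eqxx. Qed.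

Lemma diagT_edgeT x y : diagT x y -> edgeT x y.
Proof. by move=> dxy; rewrite /edgeT dxy !orbT. Qed.

Lemma edgeT_crossn_diagT s t p q :
  edgeT s t -> crossn s t p q -> q < n.+3 -> diagT s t.
Proof.
by case/or3P=> // [/eqP<-|/andP[/eqP-> /eqP->]]; rewrite /crossn; lia.
Qed.

Hypothesis hT : triangulation T.

Lemma diagT_noncross a b x y : diagT a b -> edgeT x y -> ~~ crossn a b x y.
Proof.
move=> dab; case/or3P=> [/eqP<-|/andP[/eqP-> /eqP->]|dxy].
- by rewrite /crossn; lia.
- by have [] := diagT_bounds dab; rewrite /crossn; lia.
case/andP: hT => /forallP noncross _.
case/existsP: dab => d /and3P[dT /eqP<- /eqP<-].
case/existsP: dxy => e /and3P[eT /eqP<- /eqP<-].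
by rewrite -crossesE; move/implyP: (noncross d) => /(_ dT)/forall_inP->.
Qed.

Lemma diagT_maximal x y :
  x.+1 < y -> y < n.+3 -> ~~ ((x == 0) && (y == n.+2)) ->
  (forall p q, diagT p q -> ~~ crossn x y p q) -> diagT x y.
Proof.
move=> xy yn xy0 noncross; have xn : x < n.+3 by lia.
have isd : is_diag (Ordinal xn, Ordinal yn) by rewrite /is_diag /= xy.
pose d : diag n := exist (fun p => is_diag p) _ isd.
case/andP: hT => _ /forallP/(_ d) /implyP maximal.
apply: contraT => dxy.
have /exists_inP[e eT cde] : [exists e in T, crosses d e].
  by apply: maximal; apply: contra dxy => dT; apply: (diagT_val dT).
by have /negP := noncross _ _ (diagT_val eT).
Qed.

Lemma triangle_below a b :
  edgeT a b -> a.+1 < b -> b < n.+3 -> exists c, triangleT a c b.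
Proof.
move=> eab ab bn.
(* c is the last vertex before b joined to a: a diagonal crossing (c, b) would
   have to leave a towards a vertex between c and b. *)
have exc : exists x, (x < b) && edgeT a x.
  by exists a.+1; rewrite ab /edgeT eqxx.
have ubc : forall x, (x < b) && edgeT a x -> x <= b by move=> x /andP[/ltnW].
have [c /andP[cb eac] cmax] := ex_maxnP exc ubc.
have ac : a < c.
  by case/or3P: eac => [/eqP<-|/andP[_ /eqP]|/diagT_bounds[]]; lia.
exists c; rewrite /triangleT ac cb eac eab /= andbT.
rewrite /edgeT; case: eqP => //= cb1; apply/orP; right.
apply: diagT_maximal; [lia | done | lia | move=> p q dpq].
have := diagT_noncross dpq eab; have := diagT_noncross dpq eac.
have [pq _ _] := diagT_bounds dpq.
have p_a : p = a -> q < b -> q <= c.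
  by move=> pa qb; apply: cmax; rewrite qb -pa diagT_edgeT.
by move: p_a; rewrite /crossn; lia.
Qed.

Lemma triangle_above a b :
  diagT a b -> exists u c v, [/\ triangleT u c v, v < n.+3 &
    ((u == a) && (c == b)) || ((c == a) && (v == b))].
Proof.
move=> dab; have [ab bn ab0] := diagT_bounds dab.
(* (u, v) is a shortest edge of T other than (a, b) enclosing (a, b). *)
pose P k := [exists u : 'I_n.+3, exists v : 'I_n.+3,
  [&& v - u == k, under u v a b, (u != a :> nat) || (v != b :> nat)
    & edgeT u v]].
have exP : exists k, P k.
  exists n.+2; apply/existsP; exists ord0; apply/existsP; exists ord_max.
  by rewrite /= /under /edgeT eqxx /=; lia.
have [k /existsP[u /existsP[v /and4P[/eqP uvk ab_uv uvab euv]]] kmin] :=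
  ex_minnP exP.
have [|c tri] := triangle_below euv _ (ltn_ord v).
  by move: ab_uv; rewrite /under; lia.
have /and4P[/andP[uc cv] euc ecv _] := tri.
have cn : c < n.+3 := ltn_trans cv (ltn_ord v).
have minimal (x y : 'I_n.+3) : edgeT x y -> under x y a b ->
    (x != a :> nat) || (y != b :> nat) -> k <= y - x.
  by move=> *; apply: kmin; apply/existsP; exists x; apply/existsP; exists y;
     apply/and4P.
exists u, c, v; split=> //.
have := minimal u (Ordinal cn) euc; have := minimal (Ordinal cn) v ecv.
have := triangle_under uc cv ab_uv (diagT_noncross dab euc)
  (diagT_noncross dab ecv).
by move: ab_uv uvab uvk uc cv; rewrite /under /=; lia.
Qed.

Definition ends (a b x y : nat) : bool :=
  ((a == x) && (b == y)) || ((a == y) && (b == x)).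

Definition uedgeT (y z : nat) : bool := edgeT y z || edgeT z y.

Definition share_triangleT (a b s t : nat) : Prop :=
  exists x y z, [/\ ends a b x y, ends s t x z, y != z & uedgeT y z].

Lemma share_triangleT_sym a b s t :
  share_triangleT a b s t -> share_triangleT s t a b.
Proof.
case=> x [y [z [ab st yz yzT]]]; exists x, z, y.
by rewrite eq_sym /uedgeT orbC.
Qed.

Lemma triangleT_share u c v : triangleT u c v ->
  [/\ share_triangleT u c c v, share_triangleT u c u v
    & share_triangleT c v u v].
Proof.
case/and4P=> /andP[uc cv] euc ecv euv.
split; [exists c, u, v | exists u, c, v | exists v, c, u];
  by split; rewrite /ends /uedgeT ?eqxx ?orbT ?euv ?ecv ?euc //; lia.
Qed.

Lemma triangle_outer_side u c v a' b' : triangleT u c v -> diagT a' b' ->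
  ~~ under u c a' b' -> ~~ under c v a' b' -> apart u v a' b'.
Proof.
move=> tri de e_nuc e_ncv; have /and4P[/andP[uc cv] euc ecv euv] := tri.
have [ab' _ _] := diagT_bounds de.
have := noncross_under_apart (ltnW ab') (diagT_noncross de euv).
case/orP=> [e_uv | //].
have := triangle_under uc cv e_uv (diagT_noncross de euc)
  (diagT_noncross de ecv).
rewrite (negbTE e_nuc) (negbTE e_ncv) !orbF => /andP[/eqP-> /eqP->].
by rewrite /apart !leqnn !orbT.
Qed.

(* The number of vertices strictly on the side of the chord (s, t) that
   contains the chord (a', b'). *)
Definition side_size (s t a' b' : nat) : nat :=
  if under s t a' b' then t - s - 1 else n.+3 - (t - s) - 1.

Lemma triangle_step a b a' b' :
  diagT a b -> diagT a' b' -> (a != a') || (b != b') ->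
  exists s t, [/\ edgeT s t, share_triangleT a b s t,
    forall p q, crossn a b p q -> crossn a' b' p q -> crossn s t p q
    & ((s == a') && (t == b')) || (side_size s t a' b' < side_size a b a' b')].
Proof.
move=> dab de ne; have [ab bn _] := diagT_bounds dab.
have [ab' _ _] := diagT_bounds de.
case: (boolP (under a b a' b')) => [e_d | e_nd].
  have [c tri] := triangle_below (diagT_edgeT dab) ab bn.
  have [_ sh_ac sh_cb] := triangleT_share tri.
  have /and4P[/andP[ac cb] eac ecb _] := tri.
  have := triangle_under ac cb e_d (diagT_noncross de eac)
    (diagT_noncross de ecb).
  case/or3P=> [/andP[/eqP ea /eqP eb] | e_ac | e_cb].
  - by move: ne; rewrite ea eb !eqxx.
  - exists a, c; split=> //; first exact: share_triangleT_sym.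
      by move=> p q; apply: crossn_separate e_ac _; rewrite /apart; lia.
    by rewrite /side_size e_ac e_d; lia.
  - exists c, b; split=> //; first exact: share_triangleT_sym.
      by move=> p q; apply: crossn_separate e_cb _; rewrite /apart; lia.
    by rewrite /side_size e_cb e_d; lia.
have [u [c [v [tri vn d_side]]]] := triangle_above dab.
have [sh_uc_cv sh_uc_uv sh_cv_uv] := triangleT_share tri.
have /and4P[/andP[uc cv] euc ecv euv] := tri.
case: (boolP (under u c a' b')) => [e_uc | e_nuc].
  have [ac bv] : a = c /\ b = v by move: d_side e_nd e_uc; rewrite /under; lia.
  subst a b; exists u, c; split=> //; first exact: share_triangleT_sym.
    by move=> p q; apply: crossn_separate e_uc _; rewrite /apart; lia.
  by rewrite /side_size e_uc (negbTE e_nd); lia.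
case: (boolP (under c v a' b')) => [e_cv | e_ncv].
  have [au bc] : a = u /\ b = c by move: d_side e_nd e_cv; rewrite /under; lia.
  subst a b; exists c, v; split=> //.
    by move=> p q; apply: crossn_separate e_cv _; rewrite /apart; lia.
  by rewrite /side_size e_cv (negbTE e_nd); lia.
have e_apart := triangle_outer_side tri de e_nuc e_ncv.
exists u, v; split=> //.
- by case/orP: d_side => /andP[/eqP<- /eqP<-].
- move=> p q d_pq e_pq; apply: crossn_separate _ e_apart e_pq d_pq.
  by move: d_side; rewrite /under; lia.
by move: d_side e_apart; rewrite /side_size /apart (negbTE e_nd); case: ifP;
   rewrite /under; lia.
Qed.

End Triangulation.

Lemma ccw_offset_inj N x y z : x < N -> y < N -> z < N ->
  (y + N - x) %% N = (z + N - x) %% N -> y = z.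
Proof.
move=> xN yN zN; rewrite -!addnBA ?(ltnW xN) //.
by move/eqP; rewrite eqn_modDr !modn_small // => /eqP.
Qed.

Section QuiverAdjacency.

Variables (n : nat) (T : {set diag n}).

Lemma epts_ends (d : diag n) x y :
  ends (dlo d) (dhi d) x y -> epts d = [set inord x; inord y].
Proof.
by case/orP=> /andP[/eqP<- /eqP<-]; rewrite !inord_val // /epts setUC.
Qed.

Lemma uedgeT_third_side y z : y < n.+3 -> z < n.+3 -> uedgeT T y z ->
  poly_edge (inord y : 'I_n.+3) (inord z) ||
  [exists g in T, epts g == [set (inord y : 'I_n.+3); inord z]].
Proof.
move=> yn zn; rewrite /uedgeT /edgeT /poly_edge !inordK //.
have diag_side u v : diagT T u v ->
    [exists g in T, epts g == [set (inord u : 'I_n.+3); inord v]].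
  case/existsP=> g /and3P[gT /eqP gu /eqP gv]; apply/exists_inP; exists g => //.
  by rewrite (@epts_ends g u v) // /ends gu gv !eqxx.
case/orP=> /or3P[->|->|/diag_side]; rewrite ?orbT //.
  by move=> ->; rewrite orbT.
by rewrite setUC => ->; rewrite orbT.
Qed.

Lemma arrow_of_share (d f : vtx T) :
  share_triangleT T (dlo (val d)) (dhi (val d)) (dlo (val f)) (dhi (val f)) ->
  arrow T d f || arrow T f d.
Proof.
case=> x [y [z [dxy fxz yz yzT]]].
have [d1 _ _] := diag_bounds (val d); have [f1 _ _] := diag_bounds (val f).
have [xn yn zn] : [/\ x < n.+3, y < n.+3 & z < n.+3].
  move: dxy fxz (ltn_ord (dhi (val d))) (ltn_ord (dhi (val f))); rewrite /ends.
  by move=> *; split; lia.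
have ed := epts_ends dxy; have ef := epts_ends fxz.
have df : val d != val f.
  by apply: contraNneq yz => df; move: dxy fxz; rewrite -df /ends; lia.
have corner (g h : diag n) y' z' : epts g = [set inord x; inord y'] ->
    epts h = [set inord x; inord z'] -> y' < n.+3 -> z' < n.+3 ->
    uedgeT T y' z' -> g != h -> common_triangle T g h.
  move=> eg eh y'n z'n side gh; rewrite /common_triangle gh.
  apply/existsP; exists (inord x); apply/existsP; exists (inord y').
  by apply/existsP; exists (inord z'); rewrite eg eh !eqxx uedgeT_third_side.
have zyT : uedgeT T z y by rewrite /uedgeT orbC.
have fd : val f != val d by rewrite eq_sym.
rewrite /arrow (corner _ _ _ _ ed ef yn zn yzT df).
rewrite (corner _ _ _ _ ef ed zn yn zyT fd) /=.
have : (y + n.+3 - x) %% n.+3 != (z + n.+3 - x) %% n.+3.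
  by apply: contra yz => /eqP/ccw_offset_inj-> //.
case: ltngtP => // lt _; apply/orP; [right | left];
  apply/existsP; exists (inord x);
  apply/existsP; [exists (inord y) | exists (inord z)];
  apply/existsP; [exists (inord z) | exists (inord y)];
  by rewrite ?ed ?ef !eqxx !inordK.
Qed.

Definition adj_in (X : {set vtx T}) : rel (vtx T) :=
  [rel i j | [&& i \in X, j \in X & arrow T i j || arrow T j i]].

Hypothesis hT : triangulation T.

Lemma Supp_connected (a a' : diag n) :
  {in Supp T a :&: Supp T a' &, forall i j,
    connect (adj_in (Supp T a :&: Supp T a')) i j}.
Proof.
move=> i j; set X := Supp T a :&: Supp T a'.
pose size_to (k : vtx T) :=
  side_size n (dlo (val k)) (dhi (val k)) (dlo (val j)) (dhi (val j)).
suff: forall m i, size_to i < m -> i \in X -> j \in X -> connect (adj_in X) i j.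
  by move/(_ (size_to i).+1 i (ltnSn _)).
elim=> // m IH {}i im iX jX.
have [-> | ij] := eqVneq i j; first exact: connect0.
have ne :
    (dlo (val i) != dlo (val j) :> nat) || (dhi (val i) != dhi (val j) :> nat).
  rewrite -negb_and; apply: contra ij => /andP[/eqP lo /eqP hi].
  by apply/eqP/val_inj/diag_inj.
have [s [t [est sh sep prog]]] :=
  triangle_step hT (diagT_val (valP i)) (diagT_val (valP j)) ne.
move: (iX) (jX); rewrite !inE !crossesE => /andP[ia ia'] /andP[ja ja'].
have sa := sep _ _ ia ja.
have /existsP[f /and3P[fT /eqP fs /eqP ft]] :=
  edgeT_crossn_diagT est sa (ltn_ord _).
pose k : vtx T := exist _ f fT.
have kX : k \in X by rewrite !inE !crossesE /= fs ft sa sep.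
have ik : adj_in X i k.
  by apply/and3P; split=> //; apply: arrow_of_share; rewrite /= fs ft.
apply: connect_trans (connect1 ik) _.
case/orP: prog => [/andP[/eqP sj /eqP tj] | lt].
  by have -> : k = j by apply/val_inj/diag_inj; rewrite /= ?fs ?ft.
by apply: IH kX jX; rewrite /size_to /= fs ft (leq_trans lt).
Qed.

End QuiverAdjacency.

Section MatrixSum.

Variable K : pzRingType.
Local Open Scope ring_scope.

(* On matrices of size at most 1 x 1, [mxsum] is the identification with K. *)
Definition mxsum m p (A : 'M[K]_(m, p)) : K := \sum_i \sum_j A i j.

Lemma mxsum0 m p : mxsum (0 : 'M[K]_(m, p)) = 0.
Proof.
by rewrite /mxsum big1 // => i _; rewrite big1 // => j _; rewrite mxE.
Qed.

Lemma mxsumZ m p c (A : 'M[K]_(m, p)) : mxsum (c *: A) = c * mxsum A.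
Proof.
rewrite /mxsum mulr_sumr; apply: eq_bigr => i _.
by rewrite mulr_sumr; apply: eq_bigr => j _; rewrite mxE.
Qed.

Lemma mxsum_const1 m p : mxsum (const_mx 1 : 'M[K]_(m, p)) = (m * p)%:R.
Proof.
rewrite /mxsum; under eq_bigr do under eq_bigr do rewrite mxE.
by rewrite !sumr_const !card_ord -mulrnA mulnC.
Qed.

Lemma mxsum_empty m p (A : 'M[K]_(m, p)) :
  (m == 0)%N || (p == 0)%N -> mxsum A = 0.
Proof.
case/orP=> /eqP z; rewrite /mxsum; move: A; rewrite z => A.
  by rewrite big_ord0.
by rewrite big1 // => i _; rewrite big_ord0.
Qed.

Lemma mxsum_mul m k p (A : 'M[K]_(m, k)) (B : 'M[K]_(k, p)) :
  (k <= 1)%N -> mxsum (A *m B) = mxsum A * mxsum B.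
Proof.
case: k A B => [|[|//]] A B _.
  have -> : A *m B = 0 by apply/matrixP => i j; rewrite !mxE big_ord0.
  by rewrite mxsum0 (mxsum_empty A) ?eqxx ?orbT ?mul0r.
rewrite /mxsum mulr_suml; apply: eq_bigr => i _.
rewrite !big_ord1 mulr_sumr; apply: eq_bigr => j _.
by rewrite mxE big_ord1.
Qed.

Lemma mxsum_inj m p : (m <= 1)%N -> (p <= 1)%N -> injective (@mxsum m p).
Proof.
move=> m1 p1 A B eqAB; apply/matrixP => i j.
case: m A B i eqAB m1 => [|[|//]] A B i eqAB _; first by case: i.
case: p A B j eqAB p1 => [|[|//]] A B j eqAB _; first by case: j.
by move: eqAB; rewrite /mxsum !big_ord1 (ord1 i) (ord1 j).
Qed.

End MatrixSum.

Section HomMalpha.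

Variables (R : realType) (n : nat) (T : {set diag n}) (a a' : diag n).
Local Open Scope ring_scope.

Local Notation S := (Supp T a).
Local Notation S' := (Supp T a').
Local Notation hom :=
  (forall i, 'M[R[i]]_(qdim (Malpha R T a) i, qdim (Malpha R T a') i)).

Lemma Malpha_dim_le1 (b : diag n) i : (qdim (Malpha R T b) i <= 1)%N.
Proof. by rewrite /=; case: ifP. Qed.

Lemma mxsum_qmap (b : diag n) j i :
  mxsum (qmap (Malpha R T b) j i) = ((j \in Supp T b) && (i \in Supp T b))%:R.
Proof.
by rewrite /=; case: (j \in _); case: (i \in _); rewrite ?mxsum0 ?mxsum_const1.
Qed.

Lemma qmorph_MalphaP (phi : hom) :
  qmorph (arrow T) phi <-> forall j i, arrow T j i ->
    ((j \in S) && (i \in S))%:R * mxsum (phi i) =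
    mxsum (phi j) * ((j \in S') && (i \in S'))%:R.
Proof.
split=> hphi j i /hphi.
  move/(congr1 (@mxsum _ _ _)).
  by rewrite !mxsum_mul ?Malpha_dim_le1 // !mxsum_qmap.
move=> h; apply: mxsum_inj; rewrite ?Malpha_dim_le1 //.
by rewrite !mxsum_mul ?Malpha_dim_le1 // !mxsum_qmap.
Qed.

Lemma hom_eq0 (phi : hom) i : (phi i == 0) = (mxsum (phi i) == 0).
Proof.
apply/eqP/eqP => [-> | z]; first exact: mxsum0.
by apply: mxsum_inj; rewrite ?Malpha_dim_le1 ?mxsum0.
Qed.

Lemma mxsum_hom_notin (phi : hom) i : i \notin S :&: S' -> mxsum (phi i) = 0.
Proof.
rewrite inE negb_and => /orP[] /negbTE Si;
  by apply: mxsum_empty; rewrite /= Si ?orbT.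
Qed.

Definition hom1 : hom := fun i => const_mx 1.

Lemma mxsum_hom1 i : mxsum (hom1 i) = (i \in S :&: S')%:R.
Proof. by rewrite mxsum_const1 inE /=; case: (i \in S); case: (i \in S'). Qed.

Lemma hom1_qmorph :
  ~ (exists j i, [/\ j \in S :\: S', i \in S :&: S' & arrow T j i]) ->
  ~ (exists j i, [/\ j \in S :&: S', i \in S' :\: S & arrow T j i]) ->
  qmorph (arrow T) hom1.
Proof.
move=> no_in no_out; apply/qmorph_MalphaP => j i ji.
rewrite !mxsum_hom1 !in_setI.
case jS: (j \in S); case jS': (j \in S'); case iS: (i \in S);
  case iS': (i \in S'); rewrite /= ?mul1r ?mulr1 ?mul0r ?mulr0 //.
  by case: no_out; exists j, i; rewrite in_setD !in_setI jS jS' iS iS'.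
by case: no_in; exists j, i; rewrite in_setD !in_setI jS jS' iS iS'.
Qed.

Hypothesis hT : triangulation T.

Lemma hom_mxsum_const (phi : hom) : qmorph (arrow T) phi ->
  {in S :&: S' &, forall i j, mxsum (phi i) = mxsum (phi j)}.
Proof.
move=> /qmorph_MalphaP hphi i j iX jX.
have closedX :
    closed (adj_in (S :&: S')) [pred k | mxsum (phi k) == mxsum (phi i)].
  move=> k l /and3P[kX lX /orP[kl | lk]]; rewrite !inE;
    move: kX lX; rewrite !in_setI => /andP[kS kS'] /andP[lS lS'].
    by have := hphi _ _ kl; rewrite kS kS' lS lS' mul1r mulr1 => ->.
  by have := hphi _ _ lk; rewrite kS kS' lS lS' mul1r mulr1 => <-.
have := closed_connect closedX (Supp_connected hT iX jX).
by rewrite !inE eqxx => /esym/eqP.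
Qed.

Lemma hom_bad_arrow (phi : hom) : qmorph (arrow T) phi ->
  (exists j i, [/\ j \in S :\: S', i \in S :&: S' & arrow T j i]) \/
  (exists j i, [/\ j \in S :&: S', i \in S' :\: S & arrow T j i]) ->
  forall i, mxsum (phi i) = 0.
Proof.
move=> hphi bad; have /qmorph_MalphaP hphiE := hphi.
have [i0 [i0X z0]] : exists i0, i0 \in S :&: S' /\ mxsum (phi i0) = 0.
  case: bad => [[j [i [jX iX ji]]] | [j [i [jX iX ji]]]];
    [exists i | exists j]; split=> //; have := hphiE _ _ ji; move: jX iX;
    rewrite in_setD in_setI.
    by move=> /andP[/negbTE-> ->] /andP[-> _] /=; rewrite mul1r mulr0.
  by move=> /andP[-> ->] /andP[/negbTE-> ->] /=; rewrite mul0r mulr1 => <-.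
move=> i; have [iX | iX] := boolP (i \in S :&: S').
  by rewrite (hom_mxsum_const hphi iX i0X).
exact: mxsum_hom_notin.
Qed.

Lemma hom_span (phi : hom) i0 : qmorph (arrow T) phi -> i0 \in S :&: S' ->
  forall i, phi i = mxsum (phi i0) *: hom1 i.
Proof.
move=> hphi i0X i; apply: mxsum_inj; rewrite ?Malpha_dim_le1 //.
rewrite mxsumZ mxsum_hom1.
have [iX | iX] := boolP (i \in S :&: S'); last by rewrite mulr0 mxsum_hom_notin.
by rewrite mulr1 (hom_mxsum_const hphi iX i0X).
Qed.

End HomMalpha.

Theorem mainTheorem12 (R : realType) (n : nat) (T : {set diag n})
  (hT : triangulation T) (a a' : diag n)
  (ha : positive_root T a) (ha' : positive_root T a') :
  let S := Supp T a in
  let S' := Supp T a' in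
  (Hom_nonzero (arrow T) (Malpha R T a) (Malpha R T a') <->
    [/\ S :&: S' != set0,
        ~ (exists j i, [/\ j \in S :\: S', i \in S :&: S' & arrow T j i]) &
        ~ (exists j i, [/\ j \in S :&: S', i \in S' :\: S & arrow T j i])])
  /\ (Hom_nonzero (arrow T) (Malpha R T a) (Malpha R T a') ->
      Hom_dim1 (arrow T) (Malpha R T a) (Malpha R T a')).
Proof.
move=> S S'; set good := [/\ _, _ & _]; pose phi1 := @hom1 R n T a a'.
have nonzero_good :
    Hom_nonzero (arrow T) (Malpha R T a) (Malpha R T a') -> good.
  case=> phi [hphi [i0]]; rewrite hom_eq0 => nz0.
  have i0X : i0 \in S :&: S' by apply: contraNT nz0 => /mxsum_hom_notin->.
  split; first by apply/set0Pn; exists i0.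
    by move=> bad; rewrite (hom_bad_arrow hT hphi (or_introl bad)) eqxx in nz0.
  by move=> bad; rewrite (hom_bad_arrow hT hphi (or_intror bad)) eqxx in nz0.
have good_hom1 (g : good) : exists2 i0, i0 \in S :&: S' &
    qmorph (arrow T) phi1 /\ qmorph_nonzero phi1.
  case: g => /set0Pn[i0 i0X] no_in no_out; exists i0 => //.
  split; first exact: hom1_qmorph.
  by exists i0; rewrite hom_eq0 mxsum_hom1 i0X oner_eq0.
split.
  split=> [/nonzero_good // | /good_hom1[i0 _ hom1_nz]].
  by exists phi1.
move=> /nonzero_good/good_hom1[i0 i0X [hom1_m hom1_nz]].
exists phi1; split=> // phi hphi.
by exists (mxsum (phi i0)); apply: hom_span.
Qed.
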